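(* Let $R_1,R_2$ be commutative rings with nonzero identity, $I_1$ a proper ideal of $R_1$, $I_2$ a proper ideal of $R_2$, $R=R_1\times R_2$ and $I=I_1\times I_2$. If $\Gamma''_{I_1}(R_1)$ or $\Gamma''_{I_2}(R_2)$ is not planar, then $\Gamma''_I(R)$ is not planar.
   Context: $R_1\times R_2$ has componentwise operations. For a commutative ring $S$ and an ideal $J$ of $S$, $\Gamma''_J(S)$ is the simple undirected graph whose vertex set is $\{x\in S\setminus J : xS+J\neq S\}$, with distinct vertices $x,y$ adjacent if and only if $x\notin yS+J$ and $y\notin xS+J$. A graph is planar if it can be drawn in the plane with edges meeting only at their endpoints. *)

From Stdlib Require Import Reals.
From mathcomp Require Import all_boot all_order all_algebra.
Set Implicit Arguments. Unset Strict Implicit. Unset Printing Implicit Defensive.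
Import GRing.Theory.

Definition is_idealP (S : comNzRingType) (J : pred S) : Prop :=
  (0%R \in J) /\
  (forall a b, a \in J -> b \in J -> (a + b)%R \in J) /\
  (forall r a, a \in J -> (r * a)%R \in J).

Definition proper_idealP (S : comNzRingType) (J : pred S) : Prop :=
  is_idealP J /\ ~ (forall x : S, x \in J).

Definition in_xS_J (S : comNzRingType) (J : pred S) (x z : S) : Prop :=
  exists r j, j \in J /\ z = (x * r + j)%R.

(* vertex set of Gamma''_J(S): x notin J and xS + J <> S *)
Definition gvert (S : comNzRingType) (J : pred S) (x : S) : Prop :=
  x \notin J /\ ~ (forall z : S, in_xS_J J x z).

Definition GVert (S : comNzRingType) (J : pred S) : Type :=
  { x : S | gvert J x }.

Definition gadj (S : comNzRingType) (J : pred S) (u v : GVert J) : Prop :=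
  proj1_sig u <> proj1_sig v /\
  ~ in_xS_J J (proj1_sig v) (proj1_sig u) /\
  ~ in_xS_J J (proj1_sig u) (proj1_sig v).

Definition prod_ideal (S1 S2 : comNzRingType) (J1 : pred S1) (J2 : pred S2)
  : pred (S1 * S2)%type := fun z => (z.1 \in J1) && (z.2 \in J2).

Local Open Scope R_scope.

Definition in01 (t : R) : Prop := 0 <= t <= 1.
Definition in01o (t : R) : Prop := 0 < t < 1.

Definition cont01 (g : R -> R * R) : Prop :=
  forall t, in01 t -> forall eps, 0 < eps -> exists delta, 0 < delta /\
    forall s, in01 s -> Rabs (s - t) < delta ->
      Rabs (fst (g s) - fst (g t)) < eps /\ Rabs (snd (g s) - snd (g t)) < eps.

(* A simple undirected graph (V, adj) is planar: vertices go to distinct points,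
   each edge {x,y} to a simple arc (continuous, injective on [0,1]) from x to y,
   whose interior avoids all vertex points, and interiors of arcs of distinct
   edges are disjoint. Hence edges meet only at common endpoints. *)
Definition planar (V : Type) (adj : V -> V -> Prop) : Prop :=
  exists (f : V -> R * R) (arc : V -> V -> R -> R * R),
    (forall x y, f x = f y -> x = y) /\
    (forall x y, adj x y ->
       cont01 (arc x y) /\ arc x y 0 = f x /\ arc x y 1 = f y /\
       (forall s t, in01 s -> in01 t -> arc x y s = arc x y t -> s = t) /\
       (forall t w, in01o t -> arc x y t <> f w)) /\
    (forall x y u v, adj x y -> adj u v ->
       ~ (x = u /\ y = v) -> ~ (x = v /\ y = u) ->
       forall s t, in01o s -> in01o t -> arc x y s <> arc u v t).

(* The maps x |-> (x, 0) and x |-> (0, x) embed the graphs of the factors into the graph of the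
   product: a vertex x of the first factor gives a vertex (x, 0) because (0, 1) never lies in
   (x, 0)R + I, and adjacency is reflected by projecting onto a coordinate.  A subgraph of a
   planar graph is planar, by restricting a drawing. *)
From Stdlib Require Import Reals ProofIrrelevance.
From mathcomp Require Import all_boot all_order all_algebra.
Import GRing.Theory.

Lemma planar_embedding (V W : Type) (adjV : V -> V -> Prop) (adjW : W -> W -> Prop)
    (e : V -> W) :
  injective e -> (forall x y, adjV x y -> adjW (e x) (e y)) ->
  planar adjW -> planar adjV.
Proof.
move=> e_inj e_adj [f [arc [f_inj [arc_ok arc_disj]]]].
exists (f \o e), (fun x y => arc (e x) (e y)); split; first by move=> x y /f_inj /e_inj.
split=> [x y /e_adj/arc_ok [? [? [? [? arc_avoid]]]] | x y u v /e_adj axy /e_adj auv nxy nyx].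
  by do 4?split=> //; move=> t w; apply: arc_avoid.
by apply: arc_disj axy auv _ _ => -[/e_inj exu /e_inj eyv]; [apply: nxy | apply: nyx].
Qed.

Lemma proper_ideal_1notin (S : comNzRingType) (J : pred S) :
  proper_idealP J -> 1%R \notin J.
Proof.
move=> [[_ [_ J_mul]] J_proper]; apply/negP => J1; apply: J_proper => x.
by rewrite -(mulr1 x); apply: J_mul.
Qed.

Lemma in_0S_J (S : comNzRingType) (J : pred S) (z : S) :
  in_xS_J J 0%R z -> z \in J.
Proof. by move=> [r [j [Jj ->]]]; rewrite mul0r add0r. Qed.

Section Embedding.
Variables (S T : comNzRingType) (JS : pred S) (JT : pred T) (e : S -> T).
Hypothesis e_inj : injective e.
Hypothesis e_gvert : forall x, gvert JS x -> gvert JT (e x).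
Hypothesis e_reflect : forall x z, in_xS_J JT (e x) (e z) -> in_xS_J JS x z.

Definition GVert_map (u : GVert JS) : GVert JT := exist _ (e (sval u)) (e_gvert _ (svalP u)).

Lemma planar_GVert_map : planar (@gadj T JT) -> planar (@gadj S JS).
Proof.
apply: (@planar_embedding _ _ _ _ GVert_map).
  move=> u v /(f_equal sval)/e_inj euv.
  by apply: eq_sig_hprop euv => ? ? ?; apply: proof_irrelevance.
move=> u v [neq [nvu nuv]]; split; first by move/e_inj.
by split=> /e_reflect.
Qed.

End Embedding.

Section ProductRing.
Context {R1 R2 : comNzRingType} {I1 : pred R1} {I2 : pred R2}.

Lemma in_prod_ideal (z : R1 * R2) :
  (z \in prod_ideal I1 I2) = (z.1 \in I1) && (z.2 \in I2).
Proof. by []. Qed.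

Lemma in_xS_J_fst (x z : R1 * R2) :
  in_xS_J (prod_ideal I1 I2) x z -> in_xS_J I1 x.1 z.1.
Proof.
by move=> [r [j [Ij ->]]]; exists r.1, j.1; move: Ij; rewrite in_prod_ideal => /andP[].
Qed.

Lemma in_xS_J_snd (x z : R1 * R2) :
  in_xS_J (prod_ideal I1 I2) x z -> in_xS_J I2 x.2 z.2.
Proof.
by move=> [r [j [Ij ->]]]; exists r.2, j.2; move: Ij; rewrite in_prod_ideal => /andP[].
Qed.

Lemma gvert_inl (x : R1) :
  proper_idealP I2 -> gvert I1 x -> gvert (prod_ideal I1 I2) (x, 0%R).
Proof.
move=> /proper_ideal_1notin I2_1 [I1x _]; split.
  by rewrite in_prod_ideal (negbTE I1x).
by move=> /(_ (0, 1)%R)/in_xS_J_snd/in_0S_J; apply/negP.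
Qed.

Lemma gvert_inr (x : R2) :
  proper_idealP I1 -> gvert I2 x -> gvert (prod_ideal I1 I2) (0%R, x).
Proof.
move=> /proper_ideal_1notin I1_1 [I2x _]; split.
  by rewrite in_prod_ideal (negbTE I2x) andbF.
by move=> /(_ (1, 0)%R)/in_xS_J_fst/in_0S_J; apply/negP.
Qed.

Lemma planar_prod_ideal_l :
  proper_idealP I2 -> planar (@gadj _ (prod_ideal I1 I2)) -> planar (@gadj R1 I1).
Proof.
move=> P2; apply: (@planar_GVert_map _ _ I1 (prod_ideal I1 I2) (fun x => (x, 0%R))).
- by move=> x y [].
- by move=> x; apply: gvert_inl.
- by move=> x z /in_xS_J_fst.
Qed.

Lemma planar_prod_ideal_r :
  proper_idealP I1 -> planar (@gadj _ (prod_ideal I1 I2)) -> planar (@gadj R2 I2).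
Proof.
move=> P1; apply: (@planar_GVert_map _ _ I2 (prod_ideal I1 I2) (fun x => (0%R, x))).
- by move=> x y [].
- by move=> x; apply: gvert_inr.
- by move=> x z /in_xS_J_snd.
Qed.

End ProductRing.

Theorem corollary2p4 (R1 R2 : comNzRingType) (I1 : pred R1) (I2 : pred R2) :
  proper_idealP I1 -> proper_idealP I2 ->
  (~ planar (@gadj R1 I1) \/ ~ planar (@gadj R2 I2)) ->
  ~ planar (@gadj (R1 * R2)%type (prod_ideal I1 I2)).
Proof.
move=> P1 P2 [nonplanar1 | nonplanar2] planarI.
- exact: nonplanar1 (planar_prod_ideal_l P2 planarI).
- exact: nonplanar2 (planar_prod_ideal_r P1 planarI).
Qed.
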